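(* Let $G\in\mathcal{C}$ and $N\unlhd G$. For each vertex $v$ of $\mathcal{G}_N$ there is a unique directed path in $\mathcal{G}_N$ from $(G,N,1_N)$ to $v$.
   Context: All groups are finite. $\mathcal{C}$ is the class of finite groups $G$ such that every subgroup and quotient group of $G$ is either abelian or contains a non-central abelian normal subgroup. $\psi^x(g)=\psi(xgx^{-1})$, $\psi^G$ induced character, $1_N$ trivial character. An $N$-linear character triple of $G$ is $(H,A,\vartheta)$ with $H\le G$, $A\unlhd H$, $\vartheta$ a linear character of $A$ invariant in $H$, and $\ker(\vartheta^G)=N$. For $B\unlhd M\le G$ and linear $\lambda$ on $B$, $\widetilde{\operatorname{Lin}}(M|\lambda)$ is the set of linear characters of $M$ whose restriction to $B$ contains $\lambda$ and whose induction to $G$ has kernel $N$. For each triple a normal subgroup $\mathcal{A}=\mathcal{A}_{(H,A,\vartheta)}$ of $H$ is fixed, of maximal order among normal subgroups of $H$ containing $\ker\vartheta$ with abelian quotient by $\ker\vartheta$. $\operatorname{Aut}(\mathbb{C}|\vartheta)\times H$ (field automorphisms of $\mathbb{C}$ fixing $\mathbb{Q}(\vartheta)$, times $H$) acts on $\widetilde{\operatorname{Lin}}(\mathcal{A}|\vartheta)$ by $(\sigma,h)\cdot\varphi=\sigma\circ\varphi^h$; fix orbit representatives $\mathfrak{Lin}(\mathcal{A}|\vartheta)$. If $H\neq A$, $Cl(H,A,\vartheta)=\{(I_H(\varphi),\mathcal{A},\varphi):\varphi\in\mathfrak{Lin}(\mathcal{A}|\vartheta)\}$ with $I_H(\varphi)=\{h\in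 H:\varphi^h=\varphi\}$; if $H=A$, $Cl(H,A,\vartheta)=\emptyset$. $\mathcal{G}_N$ is the directed graph whose vertices are the $N$-linear character triples $v$ reachable by a directed path from $(G,N,1_N)$ in the graph with an edge $(u,v)$ iff $v\in Cl(u)$, and whose edges are the edges of that graph between its vertices. *)

From HB Require Import structures.
From mathcomp Require Import all_boot all_order all_algebra all_fingroup all_solvable all_field all_character.
Set Implicit Arguments.
Unset Strict Implicit.
Unset Printing Implicit Defensive.
Import GRing.Theory Num.Theory.
Local Open Scope group_scope.

Definition abelian_or_ncan (hT : finGroupType) (X : {set hT}) : Prop :=
  abelian X \/
  exists A : {group hT}, [/\ A <| X, abelian A & ~~ (A \subset 'Z(X))].

Definition in_classC (gT : finGroupType) (G : {group gT}) : Prop :=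
  (forall H : {group gT}, H \subset G -> abelian_or_ncan H) /\
  (forall K : {group gT}, K <| G -> abelian_or_ncan (G / K)).

Definition triple (gT : finGroupType) :=
  {HA : {group gT} * {group gT} & 'CF(HA.2)}.

Definition mk_triple (gT : finGroupType) (H A : {group gT}) (th : 'CF(A))
  : triple gT := @Tagged _ (H, A) (fun HA => 'CF(HA.2)) th.

Definition tH (gT : finGroupType) (t : triple gT) : {group gT} := (tag t).1.
Definition tA (gT : finGroupType) (t : triple gT) : {group gT} := (tag t).2.
Definition tth (gT : finGroupType) (t : triple gT) : 'CF(tA t) := tagged t.

Definition lin_triple (gT : finGroupType) (G N : {group gT}) (t : triple gT)
  : Prop :=
  [/\ tH t \subset G, tA t <| tH t, tth t \is a linear_char,
      {in tH t, forall h, (tth t ^ h)%CF = tth t}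
    & cfker ('Ind[G] (tth t))%R = N].

Definition calA_spec (gT : finGroupType) (t : triple gT) (X : {group gT})
  : Prop :=
  [/\ X <| tH t, cfker (tth t) \subset X, abelian (X / cfker (tth t))
    & forall K : {group gT}, K <| tH t -> cfker (tth t) \subset K ->
        abelian (K / cfker (tth t)) -> #|K| <= #|X| ]%N.

Definition tLin (gT : finGroupType) (G N B M : {group gT}) (lam : 'CF(B))
  (phi : 'CF(M)) : Prop :=
  [/\ phi \is a linear_char, ('['Res[B] phi, lam] != 0)%R
    & cfker ('Ind[G] phi)%R = N].

(* Field automorphisms of C are represented by
   ring automorphisms of algC (the field of values of characters). *)
Definition lin_orbit_rel (gT : finGroupType) (H B M : {group gT})
  (th : 'CF(B)) (phi psi : 'CF(M)) : Prop :=
  exists (s : {rmorphism algC -> algC}) (h : gT),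
    [/\ forall x, s (th x) = th x, h \in H & psi = cfAut s (phi ^ h)%CF].

Definition reps_spec (gT : finGroupType) (G N : {group gT}) (t : triple gT)
  (X : {group gT}) (R : 'CF(X) -> Prop) : Prop :=
  [/\ forall phi, R phi -> tLin G N (tth t) phi,
      forall phi psi, R phi -> R psi ->
        lin_orbit_rel (tH t) (tth t) phi psi -> phi = psi
    & forall psi, tLin G N (tth t) psi ->
        exists2 phi, R phi & lin_orbit_rel (tH t) (tth t) phi psi].

Definition cl_edge (gT : finGroupType) (G N : {group gT})
  (cA : triple gT -> {group gT}) (reps : forall t, 'CF(cA t) -> Prop)
  (u v : triple gT) : Prop :=
  [/\ lin_triple G N u, lin_triple G N v, tH u != tA u
    & exists2 phi : 'CF(cA u), reps u phi &
        v = mk_triple ('I_(tH u)[phi])%G phi].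

Definition root_triple (gT : finGroupType) (G N : {group gT}) : triple gT :=
  mk_triple G (1%R : 'CF(N)).

Arguments cl_edge {gT} G N cA reps u v.

Inductive reachable (T : Type) (e : T -> T -> Prop) (r : T) : T -> Prop :=
  | reach_refl : reachable e r r
  | reach_step u v : reachable e r u -> e u v -> reachable e r v.

Definition GN_vertex (gT : finGroupType) (G N : {group gT})
  (cA : triple gT -> {group gT}) (reps : forall t, 'CF(cA t) -> Prop)
  (v : triple gT) : Prop :=
  reachable (cl_edge G N cA reps) (root_triple G N) v.

Arguments GN_vertex {gT} G N cA reps v.

Definition GN_edge (gT : finGroupType) (G N : {group gT})
  (cA : triple gT -> {group gT}) (reps : forall t, 'CF(cA t) -> Prop)
  (u v : triple gT) : Prop :=
  [/\ GN_vertex G N cA reps u, GN_vertex G N cA reps v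
    & cl_edge G N cA reps u v].

Arguments GN_edge {gT} G N cA reps u v.

Fixpoint epath (T : Type) (e : T -> T -> Prop) (x : T) (p : seq T) : Prop :=
  if p is y :: p' then e x y /\ epath e y p' else True.

Definition dpath (T : eqType) (e : T -> T -> Prop) (r v : T) (p : seq T)
  : Prop :=
  [/\ epath e r p, last r p = v & uniq (r :: p)].

From HB Require Import structures.
From mathcomp Require Import all_boot all_order all_algebra all_fingroup all_solvable all_field all_character.
Import GRing.Theory Num.Theory.
Local Open Scope group_scope.
Set Implicit Arguments.
Unset Strict Implicit.
Unset Printing Implicit Defensive.

(* If θ is an H-invariant linear character of A <| H, then [A, H] lies in
   ker θ, so 𝒜A / ker θ is still abelian and 𝒜A is normal in H; maximality
   of 𝒜 forces A ⊆ 𝒜.  Along an edge (H, A, θ) -> (I_H(φ), 𝒜, φ) the linear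
   characters Res_A φ and θ have nonzero inner product, hence Res_A φ = θ.
   By induction, the character at the end of any walk from a vertex u
   restricts to θ_u on A_u.  Two successors of u are determined by their
   characters on 𝒜_u, so distinct successors reach disjoint sets of
   vertices, which makes the path from the root to any vertex unique;
   existence follows by shortening a walk. *)

Lemma epath_cat (T : Type) (e : T -> T -> Prop) x p q :
  epath e x (p ++ q) <-> epath e x p /\ epath e (last x p) q.
Proof.
elim: p x => [|y p IHp] x /=; first by split=> [|[]].
split=> [[e_xy /IHp[]] | [[e_xy p_p] p_q]] //.
by split=> //; apply/IHp.
Qed.

Lemma reachable_epath (T : Type) (e : T -> T -> Prop) r v : reachable e r v ->
  exists2 p, epath (fun x y => [/\ reachable e r x, reachable e r y & e x y])
               r p
           & last r p = v.
Proof.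
elim=> [|u w r_u [p p_r_u l_p] e_uw]; first by exists [::].
exists (rcons p w); last by rewrite last_rcons.
rewrite -cats1; apply/epath_cat; split=> //=; rewrite l_p.
by split=> //; split=> //; apply: reach_step e_uw.
Qed.

Definition branches_disjoint (T : Type) (e : T -> T -> Prop) :=
  forall x y z p q, e x y -> e x z -> epath e y p -> epath e z q ->
    last y p = last z q -> y = z.

Lemma epath_sub (T : Type) (e e' : T -> T -> Prop) x p :
  (forall u v, e u v -> e' u v) -> epath e x p -> epath e' x p.
Proof. by move=> sub_e; elim: p x => [|y p IHp] x //= [/sub_e ? /IHp]. Qed.

Lemma branches_disjoint_sub (T : Type) (e e' : T -> T -> Prop) :
  (forall u v, e' u v -> e u v) -> branches_disjoint e -> branches_disjoint e'.
Proof.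
move=> sub_e disj_e x y z p q /sub_e e_xy /sub_e e_xz p_y p_z.
by apply: disj_e e_xy e_xz (epath_sub sub_e p_y) (epath_sub sub_e p_z).
Qed.

Section Paths.

Variables (T : eqType) (e : T -> T -> Prop).

Lemma epath_shorten x p : epath e x p -> exists q, dpath e x (last x p) q.
Proof.
elim: p x => [|y p IHp] x /=; first by exists [::].
case=> e_xy /IHp[q [p_q <- u_q]].
have [x_yq | x_yq] := boolP (x \in y :: q); last first.
  by exists (y :: q); split=> //=; rewrite x_yq.
have p_yq : epath e x (y :: q) by [].
rewrite -[last y q]/(last x (y :: q)).
case/splitPr: x_yq p_yq u_q => q1 q2 /epath_cat[_ p_q2] u_q12.
exists q2; split; first by case: p_q2.
- by rewrite last_cat.
by move: u_q12; rewrite cat_uniq => /and3P[].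
Qed.

Lemma dpath_unique r v p q : branches_disjoint e ->
  dpath e r v p -> dpath e r v q -> p = q.
Proof.
move=> disj_e [p_p <- u_p] [p_q l_q u_q].
elim: p r q p_p u_p p_q l_q u_q => [|y p IHp] r [|z q] //=.
- by move=> _ _ _ <- /andP[/negP[]]; apply: mem_last.
- by move=> _ /andP[/negP r_p _] _ l_p _; case: r_p; rewrite l_p mem_last.
move=> [e_ry p_p] /andP[_ u_p] [e_rz p_q] l_pq /andP[_ u_q].
have y_z := disj_e _ _ _ _ _ e_ry e_rz p_p p_q (esym l_pq); subst z.
by rewrite (IHp y q).
Qed.

End Paths.

Lemma lin_char_cfdot_neq0_eq (gT : finGroupType) (B : {group gT})
  (a b : 'CF(B)) :
  a \is a linear_char -> b \is a linear_char -> ('[a, b] != 0)%R -> a = b.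
Proof.
move=> /lin_char_irr/irrP[i ->] /lin_char_irr/irrP[j ->].
by rewrite cfdot_irr pnatr_eq0 eqb0 negbK => /eqP ->.
Qed.

Section InvariantLinearChar.

Variables (gT : finGroupType) (H A : {group gT}) (theta : 'CF(A)).
Hypotheses (nsAH : A <| H) (lin_theta : theta \is a linear_char).
Hypothesis Hinv_theta : {in H, forall h, (theta ^ h)%CF = theta}.

Lemma cfker_invariant_norm : H \subset 'N(cfker theta).
Proof.
apply/normsP=> h Hh; have nAh := subsetP (normal_norm nsAH) h Hh.
by rewrite -cfker_conjg ?Hinv_theta.
Qed.

Lemma commg_sub_cfker_invariant : [~: A, H] \subset cfker theta.
Proof.
rewrite gen_subG; apply/subsetP=> _ /imset2P[a h Aa Hh ->].
have nAh := subsetP (normal_norm nsAH) h Hh.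
have Aah : a ^ h \in A by rewrite memJ_norm.
have theta_ah : theta (a ^ h) = theta a.
  by rewrite -{1}(Hinv_theta Hh) cfConjgEJ.
rewrite /= cfkerEchar ?lin_charW // inE commgEl groupM ?groupV //=.
rewrite lin_charM ?groupV // lin_charV // theta_ah lin_char1 //.
by rewrite mulVf ?lin_char_neq0.
Qed.

Lemma quotient_abelian_join_invariant (X : {group gT}) :
  X <| H -> abelian (X / cfker theta) -> abelian ((X <*> A) / cfker theta).
Proof.
move=> nsXH abX.
have nXA := subset_trans (normal_sub nsAH) (normal_norm nsXH).
have nKX := subset_trans (normal_sub nsXH) cfker_invariant_norm.
have cAH := quotient_cents2r commg_sub_cfker_invariant.
have cAY (Y : {group gT}) :
    Y \subset H -> A / cfker theta \subset 'C(Y / cfker theta).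
  by move=> sYH; apply: subset_trans cAH (centS (quotientS _ sYH)).
rewrite norm_joinEr // quotientMl // abelianM abX.
by apply/and3P; split=> //; apply: cAY; apply: normal_sub.
Qed.

End InvariantLinearChar.

Lemma lin_triple_sub_calA (gT : finGroupType) (G N : {group gT})
  (t : triple gT) (X : {group gT}) :
  lin_triple G N t -> calA_spec t X -> tA t \subset X.
Proof.
case=> _ nsAH lin_th Hinv_th _ [nsXH kerX abX maxX].
have le_XA_X := maxX (X <*> tA t)%G (normalY nsXH nsAH)
  (subset_trans kerX (joing_subl _ _))
  (quotient_abelian_join_invariant nsAH lin_th Hinv_th nsXH abX).
have /eqP-> : X :==: X <*> tA t by rewrite eqEcard joing_subl le_XA_X.
exact: joing_subr.
Qed.

Section ClEdges.

Variables (gT : finGroupType) (G N : {group gT}).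
Variables (cA : triple gT -> {group gT}) (reps : forall t, 'CF(cA t) -> Prop).
Arguments reps : clear implicits.
Hypothesis cA_spec : forall t, lin_triple G N t -> calA_spec t (cA t).
Hypothesis reps_specP :
  forall t, lin_triple G N t -> tH t != tA t -> reps_spec G N t (reps t).

Lemma cl_edge_res u v : cl_edge G N cA reps u v ->
  tA u \subset tA v /\ ('Res[tA u] (tth v))%R = tth u.
Proof.
case=> lin_u _ nAHu [phi reps_phi ->].
have [/(_ phi reps_phi) [lin_phi res_phi _] _ _] := reps_specP lin_u nAHu.
split; first exact: lin_triple_sub_calA lin_u (cA_spec lin_u).
apply: lin_char_cfdot_neq0_eq res_phi; first exact: cfRes_lin_char lin_phi.
by case: lin_u.
Qed.

Lemma cl_epath_res u p : epath (cl_edge G N cA reps) u p ->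
  tA u \subset tA (last u p) /\ ('Res[tA u] (tth (last u p)))%R = tth u.
Proof.
elim: p u => [|v p IHp] u /=; first by rewrite cfRes_id.
case=> /cl_edge_res[sAuv res_uv] /IHp[sAv res_v].
split; first exact: subset_trans sAv.
by rewrite -(cfResRes _ sAuv sAv) res_v res_uv.
Qed.

Lemma cl_edge_branches_disjoint : branches_disjoint (cl_edge G N cA reps).
Proof.
move=> x y z p q [_ _ _ [phi _ ->]] [_ _ _ [psi _ ->]].
move=> /cl_epath_res[_ /= res_phi] /cl_epath_res[_ /= res_psi] same_end.
by rewrite -res_phi same_end res_psi.
Qed.

End ClEdges.

Theorem lemma1 (gT : finGroupType) (G N : {group gT})
  (cA : triple gT -> {group gT}) (reps : forall t, 'CF(cA t) -> Prop) :
  in_classC G -> N <| G ->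
  (forall t, lin_triple G N t -> calA_spec t (cA t)) ->
  (forall t, lin_triple G N t -> tH t != tA t -> reps_spec G N t (reps t)) ->
  forall v, GN_vertex G N cA reps v ->
  exists! p : seq (triple gT),
    dpath (GN_edge G N cA reps) (root_triple G N) v p.
Proof.
move=> _ _ cA_spec reps_specP v reach_v.
have [p walk_p <-] := reachable_epath reach_v.
have [q path_q] := epath_shorten walk_p.
exists q; split=> // q' path_q'.
apply: dpath_unique path_q path_q'.
apply: branches_disjoint_sub (cl_edge_branches_disjoint cA_spec reps_specP).
by move=> u w [].
Qed.
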